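(* Let $A\in\mathbb{R}^{p\times n}$ with $A\mathbf{1}=\mathbf{0}$, let $A=U\Sigma V$ be its compact SVD with singular values in descending order ($V$ with orthonormal rows), and let $K$ be an integer with $2\le K\le\operatorname{rank}(A)+1$; let $V_{1:K-1}$ be the first $K-1$ rows of $V$ (the solution of PCA $\min_{D,X}\|A-DX\|_F^2$ s.t. $XX^T=I$, $X\in\mathbb{R}^{(K-1)\times n}$). Put $\beta=-\min_{i,j}(A^TA)_{ij}$, $\tilde A=\begin{bmatrix}\sqrt\beta\,\mathbf{1}^T\\ A\end{bmatrix}$, $W=\tilde A^T\tilde A$, $L=\operatorname{diag}(W\mathbf{1})-W$. Let $H\in\mathbb{R}^{K\times n}$ be a normalized-indicator solution of K-means $\min_{D,X}\|A-DX\|_F^2$ s.t. $X\in\mathcal{H}$ (equivalently of ratio cut $\min_X\operatorname{tr}\{XLX^T\}$ s.t. $X\in\mathcal{H}$). If $W$ satisfies the ideal graph condition with respect to $K$ clusters, then there exists $R\in\mathbb{R}^{K\times K}$ with $R^TR=I$ such that $$\begin{bmatrix}\tfrac1{\sqrt n}\mathbf{1}^T\\ V_{1:K-1}\end{bmatrix}=RH.$$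
   Context: $\mathbf{1}$ is the all-ones vector, $\operatorname{diag}(v)$ the diagonal matrix with diagonal $v$. $\mathcal{F}$ is the set of matrices $F\in\{0,1\}^{K\times n}$ each of whose columns has exactly one entry $1$ (clusters nonempty), and $\mathcal{H}=\{(FF^T)^{-1/2}F:F\in\mathcal{F}\}$. Ideal graph condition for $W$ with respect to $K$: the graph on $\{1,\dots,n\}$ with an edge between $i,j$ whenever $W_{ij}>0$ has exactly $K$ connected components. *)

From HB Require Import structures.
From mathcomp Require Import all_boot all_order all_algebra.
From mathcomp Require Import reals.
Set Implicit Arguments. Unset Strict Implicit. Unset Printing Implicit Defensive.
Import Order.TTheory GRing.Theory Num.Theory.
Local Open Scope ring_scope.

Definition ones {R : realType} (n : nat) : 'cV[R]_n := const_mx 1.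

Definition frob2 {R : realType} {m n : nat} (M : 'M[R]_(m, n)) : R :=
  \sum_(i < m) \sum_(j < n) M i j ^+ 2.

Definition is_min_entry {R : realType} {m n : nat} (M : 'M[R]_(m, n)) (mu : R) :=
  (exists i j, M i j = mu) /\ (forall i j, mu <= M i j).

Definition in_F {R : realType} {K n : nat} (F : 'M[R]_(K, n)) : Prop :=
  [/\ forall k j, F k j = 0 \/ F k j = 1,
      forall j, exists! k, F k j = 1
    & forall k, exists j, F k j = 1].

(* For F in \mathcal{F}, F F^T is diagonal with positive diagonal entries
   (the cluster sizes), so (F F^T)^{-1/2} is the diagonal matrix with entries
   1/sqrt((F F^T)_kk). *)
Definition inv_sqrt_diag {R : realType} {K : nat} (D : 'M[R]_K) : 'M[R]_K :=
  diag_mx (\row_k (Num.sqrt (D k k))^-1).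

Definition in_H {R : realType} {K n : nat} (X : 'M[R]_(K, n)) : Prop :=
  exists F : 'M[R]_(K, n), in_F F /\ X = inv_sqrt_diag (F *m F^T) *m F.

Definition n_components {R : realType} {n : nat} (W : 'M[R]_n) : nat :=
  let e := [rel i j : 'I_n | 0 < W i j] in
  #|[set [set j | connect e i j] | i : 'I_n]|.

Definition ideal_graph {R : realType} {n : nat} (W : 'M[R]_n) (K : nat) : Prop :=
  n_components W = K.

(* Entry (k, j) of row k of V (0 if k is out of range). *)
Definition row_at {R : realType} {r n : nat} (V : 'M[R]_(r, n)) (k : nat) (j : 'I_n) : R :=
  match @insub _ (fun i => i < r)%N 'I_r k with Some i => V i j | None => 0 end.

Definition pca_stack {R : realType} {r n : nat} (K : nat) (V : 'M[R]_(r, n)) : 'M[R]_(K, n) :=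
  \matrix_(k < K, j < n)
     if (k == 0 :> nat) then (Num.sqrt (n%:R))^-1 else row_at V (k.-1) j.

(* Write G = A^T A and W = G + beta J, J the all-ones matrix.  Since A 1 = 0,
   W is the weight matrix of a graph with nonnegative weights in which every
   vertex has degree d = beta n, and the Laplacian identity
   2 (d |x|^2 - x^T W x) = sum_ij W_ij (x_i - x_j)^2 shows x^T W x <= d |x|^2,
   with equality exactly when x is constant on the connected components.
   By the ideal graph condition the normalized indicator X0 of the K
   components lies in H and has tr (X0 W X0^T) = K d.  On H, K-means amounts to
   maximizing tr (X G X^T) and tr (X J X^T) = n, so tr (H W H^T) >= K d and
   every row of H is constant on the components.  The eigenvectors of W are
   1/sqrt n (eigenvalue d) and the rows of V (eigenvalues s_i^2), so Ky Fan's
   bound forces s_i^2 = d for i < K - 1, and these rows are constant on the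
   components as well.  Both K x n matrices thus have orthonormal rows spanning
   the row space of X0, hence differ by an orthogonal matrix. *)

From HB Require Import structures.
From mathcomp Require Import all_boot all_order all_algebra.
From mathcomp Require Import reals.
From mathcomp Require Import ring lra.
Import Order.TTheory GRing.Theory Num.Theory.
Local Open Scope ring_scope.

Set Implicit Arguments.
Unset Strict Implicit.
Unset Printing Implicit Defensive.

Lemma sum_le_const_eq (R : realDomainType) (I : finType) (P : pred I)
    (a : I -> R) (b : R) :
  (forall i, P i -> a i <= b) -> \sum_(i | P i) b <= \sum_(i | P i) a i ->
  forall i, P i -> a i = b.
Proof.
move=> le_ab le_sum i Pi.
have ge0 j : P j -> 0 <= b - a j by move/le_ab; rewrite subr_ge0.
have sum0 : \sum_(j | P j) (b - a j) = 0.
  by apply/le_anti; rewrite sumr_ge0 // andbT sumrB subr_le0.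
by apply/eqP; rewrite eq_sym -subr_eq0; apply/eqP/(psumr_eq0P ge0 sum0).
Qed.

Lemma row_sqr_sum (R : comPzRingType) (K n : nat) (X : 'M[R]_(K, n)) k :
  X *m X^T = 1%:M -> \sum_j X k j ^+ 2 = 1.
Proof.
move=> /matrixP /(_ k k); rewrite !mxE eqxx mulr1n => <-.
by apply: eq_bigr => j _; rewrite mxE expr2.
Qed.

Lemma connect_const (T : finType) (U : Type) (e : rel T) (f : T -> U) :
  (forall i j, e i j -> f i = f j) -> forall i j, connect e i j -> f i = f j.
Proof.
move=> fe i j /connectP [q eq ->] {j}.
by elim: q i eq => //= k q IHq i /andP [/fe -> /IHq].
Qed.

Section RegularWeights.
Variables (R : realFieldType) (n : nat).

Definition qform (M : 'M[R]_n) (x : 'I_n -> R) : R :=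
  \sum_j (\sum_i x i * M i j) * x j.

Lemma qform_mx (K : nat) (X : 'M[R]_(K, n)) (M : 'M[R]_n) k :
  (X *m M *m X^T) k k = qform M (X k).
Proof. by rewrite !mxE; apply: eq_bigr => j _; rewrite !mxE. Qed.

Lemma mxtrace_qform (K : nat) (X : 'M[R]_(K, n)) (M : 'M[R]_n) :
  \tr (X *m M *m X^T) = \sum_k qform M (X k).
Proof. by apply: eq_bigr => k _; rewrite qform_mx. Qed.

Definition regular_weights (W : 'M[R]_n) (d : R) :=
  [/\ forall i j, W i j = W j i, forall i j, 0 <= W i j
    & forall i, \sum_j W i j = d].

Definition const_on_components (W : 'M[R]_n) (x : 'I_n -> R) :=
  forall i j, connect [rel i j | 0 < W i j] i j -> x i = x j.

Variables (W : 'M[R]_n) (d : R).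
Hypothesis regW : regular_weights W d.

Lemma laplacian_qform (x : 'I_n -> R) :
  (d * \sum_i x i ^+ 2 - qform W x) * 2 =
  \sum_i \sum_j W i j * (x i - x j) ^+ 2.
Proof.
have [Wsym _ Wsum] := regW.
have expand i j : W i j * (x i - x j) ^+ 2 =
    W i j * x i ^+ 2 + W j i * x j ^+ 2 - 2 * (x i * W i j * x j).
  by rewrite (Wsym j i); ring.
apply/esym; under eq_bigr do under eq_bigr do rewrite expand.
under eq_bigr do rewrite sumrB big_split /=.
rewrite sumrB big_split /= [X in _ + X - _]exchange_big /=.
have -> : \sum_i \sum_j W i j * x i ^+ 2 = d * \sum_i x i ^+ 2.
  by rewrite mulr_sumr; apply: eq_bigr => i _; rewrite -mulr_suml Wsum mulrC.
have -> : \sum_i \sum_j 2 * (x i * W i j * x j) = 2 * qform W x.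
  rewrite /qform exchange_big mulr_sumr; apply: eq_bigr => j _.
  by rewrite mulr_suml mulr_sumr; apply: eq_bigr => i _; ring.
ring.
Qed.

Lemma qform_le (x : 'I_n -> R) : qform W x <= d * \sum_i x i ^+ 2.
Proof.
have [_ Wge0 _] := regW.
rewrite -subr_ge0 -(pmulr_lge0 _ (ltr0Sn _ 1)) laplacian_qform.
by do 2!apply: sumr_ge0 => ? _; rewrite mulr_ge0 ?sqr_ge0.
Qed.

Lemma qform_eqP (x : 'I_n -> R) :
  qform W x = d * \sum_i x i ^+ 2 <-> const_on_components W x.
Proof.
have [_ Wge0 _] := regW.
have term_ge0 i j : 0 <= W i j * (x i - x j) ^+ 2 by rewrite mulr_ge0 ?sqr_ge0.
have row_ge0 i : 0 <= \sum_j W i j * (x i - x j) ^+ 2 by apply: sumr_ge0.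
split=> [eqx | cx].
- apply: connect_const => i j /= Wij.
  have /esym := laplacian_qform x; rewrite eqx subrr mul0r => /psumr_eq0P.
  move=> /(_ (fun i _ => row_ge0 i) i isT) /psumr_eq0P.
  move=> /(_ (fun j _ => term_ge0 i j) j isT) /eqP.
  by rewrite mulf_eq0 gt_eqF //= sqrf_eq0 subr_eq0 => /eqP.
- have sum0 : \sum_i \sum_j W i j * (x i - x j) ^+ 2 = 0.
    apply: big1 => i _; apply: big1 => j _.
    have [/connect1/cx ->|] := ltP 0 (W i j).
      by rewrite subrr expr0n mulr0.
    by move=> Wle; rewrite (le_anti (introT andP (conj Wle (Wge0 i j)))) mul0r.
  move: (laplacian_qform x); rewrite sum0 => /eqP.
  by rewrite mulf_eq0 pnatr_eq0 orbF subr_eq0 => /eqP.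
Qed.

Lemma regular_degree_ge0 : (0 < n)%N -> 0 <= d.
Proof.
move=> n_gt0; have [_ Wge0 Wsum] := regW.
by rewrite -(Wsum (Ordinal n_gt0)) sumr_ge0.
Qed.

Lemma mxtrace_rows_const (K : nat) (X : 'M[R]_(K, n)) :
  X *m X^T = 1%:M -> (forall k, const_on_components W (X k)) ->
  \tr (X *m W *m X^T) = K%:R * d.
Proof.
move=> XXt cX; rewrite mxtrace_qform.
under eq_bigr do rewrite (proj2 (qform_eqP _) (cX _)) row_sqr_sum // mulr1.
by rewrite sumr_const card_ord mulr_natl.
Qed.

Lemma rows_const_of_mxtrace_ge (K : nat) (X : 'M[R]_(K, n)) :
  X *m X^T = 1%:M -> K%:R * d <= \tr (X *m W *m X^T) ->
  forall k, const_on_components W (X k).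
Proof.
move=> XXt trX k; apply/qform_eqP; rewrite row_sqr_sum // mulr1.
apply: (sum_le_const_eq (P := xpredT) (a := fun k => qform W (X k)))
  => [l _||//].
  by have := qform_le (X l); rewrite row_sqr_sum // mulr1.
by rewrite sumr_const card_ord -mulr_natl -mxtrace_qform.
Qed.

End RegularWeights.

Section OrthogonalProjection.
Variable R : realFieldType.

Lemma gram_diag_ge0 (m n : nat) (N : 'M[R]_(m, n)) i : 0 <= (N *m N^T) i i.
Proof. by rewrite mxE; apply: sumr_ge0 => j _; rewrite mxE -expr2 sqr_ge0. Qed.

Lemma mxtrace_gram_ge0 (m n : nat) (N : 'M[R]_(m, n)) : 0 <= \tr (N *m N^T).
Proof. by apply: sumr_ge0 => i _; apply: gram_diag_ge0. Qed.

Variables (m n p : nat) (Y : 'M[R]_(m, n)) (Z : 'M[R]_(p, n)).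
Hypothesis YYt : Y *m Y^T = 1%:M.

Lemma gram_proj_residual :
  (Z - Z *m Y^T *m Y) *m (Z - Z *m Y^T *m Y)^T =
  Z *m Z^T - Z *m Y^T *m Y *m Z^T.
Proof.
rewrite linearB /= !trmx_mul trmxK mulmxBl !mulmxBr.
have -> : Z *m Y^T *m Y *m (Y^T *m (Y *m Z^T)) = Z *m Y^T *m Y *m Z^T.
  by rewrite -!mulmxA (mulmxA Y Y^T) YYt mul1mx.
by rewrite !mulmxA subrr subr0.
Qed.

Lemma gram_proj_diag_le i : (Z *m Y^T *m Y *m Z^T) i i <= (Z *m Z^T) i i.
Proof.
rewrite -subr_ge0; have := gram_diag_ge0 (Z - Z *m Y^T *m Y) i.
by rewrite gram_proj_residual !mxE.
Qed.

Lemma mxtrace_gram_proj_le : \tr (Z *m Y^T *m Y *m Z^T) <= \tr (Z *m Z^T).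
Proof. by apply: ler_sum => i _; apply: gram_proj_diag_le. Qed.

End OrthogonalProjection.

Section KyFan.
Variable R : realFieldType.

Lemma sum_ord_lt (m k : nat) : (k <= m)%N ->
  \sum_(j < m | (j < k)%N) (1 : R) = k%:R.
Proof.
by move=> km; rewrite -(big_ord_widen m (fun _ => 1) km) sumr_const card_ord.
Qed.

(* 0 <= c is needed because the weights may sum to less than k. *)
Lemma weighted_sum_le_top (m k : nat) (lam w : 'I_m -> R) (c : R) :
  (k <= m)%N -> 0 <= c ->
  (forall j : 'I_m, (j < k)%N -> c <= lam j) ->
  (forall j : 'I_m, (k <= j)%N -> lam j <= c) ->
  (forall j, 0 <= w j <= 1) -> \sum_j w j <= k%:R ->
  \sum_j lam j * w j <= \sum_(j < m | (j < k)%N) lam j.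
Proof.
move=> km c0 lam_top lam_low w01 sum_w.
rewrite (bigID (fun j : 'I_m => (j < k)%N)) /=.
set top := \sum_(j < m | (j < k)%N) _; set low := \sum_(j < m | ~~ _) _.
have top_gap : \sum_(j < m | (j < k)%N) c * (1 - w j) <=
    \sum_(j < m | (j < k)%N) lam j - top.
  rewrite /top -sumrB; apply: ler_sum => j jk.
  rewrite -[X in _ <= X - _]mulr1 -mulrBr ler_wpM2r ?lam_top //.
  by rewrite subr_ge0; case/andP: (w01 j).
have low_le : low <= \sum_(j < m | ~~ (j < k)%N) c * w j.
  apply: ler_sum => j; rewrite -leqNgt => kj.
  by rewrite ler_wpM2r ?lam_low //; case/andP: (w01 j).
have gap_ge0 : 0 <= \sum_(j < m | (j < k)%N) c * (1 - w j) -
    \sum_(j < m | ~~ (j < k)%N) c * w j.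
  rewrite -!mulr_sumr -mulrBr mulr_ge0 // sumrB sum_ord_lt //.
  move: sum_w; rewrite (bigID (fun j : 'I_m => (j < k)%N)) /=; lra.
lra.
Qed.

Lemma mxtrace_le_top_eigenvalues (m n K : nat) (Vt : 'M[R]_(m, n))
    (lam : 'rV[R]_m) (X : 'M[R]_(K, n)) :
  Vt *m Vt^T = 1%:M -> X *m X^T = 1%:M -> (0 < K <= m)%N ->
  (forall j, 0 <= lam 0 j) ->
  (forall i j : 'I_m, (i <= j)%N -> lam 0 j <= lam 0 i) ->
  \tr (X *m (Vt^T *m diag_mx lam *m Vt) *m X^T) <=
  \sum_(j < m | (j < K)%N) lam 0 j.
Proof.
move=> VVt XXt /andP [K0 Km] lam_ge0 lam_noninc.
set M := X *m Vt^T.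
have MtM : M^T *m M = Vt *m X^T *m X *m Vt^T by rewrite trmx_mul trmxK !mulmxA.
have -> : \tr (X *m (Vt^T *m diag_mx lam *m Vt) *m X^T) =
    \sum_j lam 0 j * (M^T *m M) j j.
  have -> : X *m (Vt^T *m diag_mx lam *m Vt) *m X^T = M *m diag_mx lam *m M^T.
    by rewrite /M trmx_mul trmxK !mulmxA.
  rewrite mxtrace_mulC mulmxA; apply: eq_bigr => j _.
  by rewrite mul_mx_diag mxE mulrC.
have KVm : (K.-1 < m)%N by rewrite prednK.
apply: (weighted_sum_le_top _ _ (c := lam 0 (Ordinal KVm))) => //.
- by move=> j jK; apply: lam_noninc; rewrite /= -ltnS prednK.
- by move=> j Kj; apply: lam_noninc; rewrite /= (leq_trans (leq_pred K)).
- move=> j; have := gram_diag_ge0 M^T j; rewrite trmxK => -> /=.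
  by rewrite MtM (le_trans (gram_proj_diag_le Vt XXt j)) // VVt mxE eqxx.
- change (\tr (M^T *m M) <= K%:R); rewrite mxtrace_mulC -(mxtrace1 R K) -XXt.
  by rewrite /M trmx_mul trmxK mulmxA; apply: mxtrace_gram_proj_le.
Qed.

End KyFan.

Section Spectrum.
Variables (R : realFieldType) (n : nat) (W : 'M[R]_n) (d : R).
Hypothesis regW : regular_weights W d.
Variables (m : nat) (Vt : 'M[R]_(m, n)) (lam : 'rV[R]_m).
Hypotheses (VVt : Vt *m Vt^T = 1%:M) (W_eigen : W = Vt^T *m diag_mx lam *m Vt).

Lemma eigen_qform j : qform W (Vt j) = lam 0 j.
Proof.
rewrite -qform_mx W_eigen !mulmxA VVt mul1mx -mulmxA VVt mulmx1.
by rewrite mxE eqxx mulr1n.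
Qed.

Lemma eigenvalue_le_degree j : lam 0 j <= d.
Proof. by rewrite -eigen_qform -[d]mulr1 -(row_sqr_sum j VVt) qform_le. Qed.

(* Ky Fan: the trace bound K d is attained only if the K largest eigenvalues
   all equal the largest possible one, d. *)
Lemma top_eigenvectors_const (K : nat) (X : 'M[R]_(K, n)) :
  (0 < K <= m)%N -> (forall j, 0 <= lam 0 j) ->
  (forall i j : 'I_m, (i <= j)%N -> lam 0 j <= lam 0 i) ->
  X *m X^T = 1%:M -> K%:R * d <= \tr (X *m W *m X^T) ->
  forall j : 'I_m, (j < K)%N -> const_on_components W (Vt j).
Proof.
move=> /andP [K0 Km] lam_ge0 lam_noninc XXt trX j jK.
apply/(qform_eqP regW); rewrite row_sqr_sum // mulr1 eigen_qform.
apply: (sum_le_const_eq (P := fun j : 'I_m => (j < K)%N)) => // [i _|].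
  exact: eigenvalue_le_degree.
rewrite (eq_bigr (fun=> d * 1)) => [|*]; last by rewrite mulr1.
rewrite -mulr_sumr sum_ord_lt // mulrC.
apply: le_trans trX _; rewrite W_eigen.
by apply: mxtrace_le_top_eigenvalues; rewrite ?K0.
Qed.

End Spectrum.

Section NormalizedIndicators.
Variables (R : realType) (K n : nat).
Implicit Types (F X : 'M[R]_(K, n)).

Lemma in_F_facts F : in_F F ->
  [/\ forall k j, F k j * F k j = F k j,
      forall k l j, k != l -> F k j * F l j = 0,
      forall k, 0 < \sum_j F k j * F k j
    & forall j, \sum_k F k j = 1].
Proof.
move=> [F01 Funiq Fne]; split.
- by move=> k j; case: (F01 k j) => ->; rewrite ?mul0r ?mul1r.
- move=> k l j kl; case: (F01 k j) => [->|Fk]; first by rewrite mul0r.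
  case: (F01 l j) => [->|Fl]; first by rewrite mulr0.
  have [k0 [_ k0uniq]] := Funiq j.
  by move: kl; rewrite -(k0uniq _ Fk) -(k0uniq _ Fl) eqxx.
- move=> k; have [j Fkj] := Fne k.
  rewrite (bigD1 j) //= Fkj mul1r ltr_pwDl // sumr_ge0 // => i _.
  by rewrite -expr2 sqr_ge0.
- move=> j; have [k0 [Fk0 k0uniq]] := Funiq j.
  rewrite (bigD1 k0) //= Fk0 big1 ?addr0 // => k kk0.
  by case: (F01 k j) => // Fk; move: kk0; rewrite -(k0uniq _ Fk) eqxx.
Qed.

Lemma in_H_entries X : in_H X -> exists2 F, in_F F &
  forall k j, X k j = (Num.sqrt (\sum_i F k i * F k i))^-1 * F k j.
Proof.
move=> [F [inF ->]]; exists F => // k j.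
rewrite /inv_sqrt_diag mul_diag_mx !mxE; congr ((Num.sqrt _)^-1 * _).
by apply: eq_bigr => i _; rewrite mxE.
Qed.

Lemma in_H_orthonormal X : in_H X -> X *m X^T = 1%:M.
Proof.
move=> /in_H_entries [F /in_F_facts [_ Forth Fpos _] XE].
apply/matrixP => k l; rewrite !mxE.
under eq_bigr do rewrite mxE !XE.
case: eqVneq => [<-|kl] /=.
- set c := \sum_i F k i * F k i.
  have c_gt0 : 0 < c by apply: Fpos.
  transitivity ((Num.sqrt c)^-1 ^+ 2 * c).
    by rewrite /c mulr_sumr; apply: eq_bigr => j _; ring.
  by rewrite exprVn sqr_sqrtr ?mulVf ?gt_eqF // ltW.
- by apply: big1 => j _; rewrite mulrACA Forth ?mulr0.
Qed.

Lemma in_H_mxtrace_const X : in_H X -> \tr (X *m const_mx 1 *m X^T) = n%:R.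
Proof.
move=> /in_H_entries [F /in_F_facts [Fsq _ Fpos Fcol] XE].
have diagE k : (X *m const_mx 1 *m X^T) k k = (\sum_j X k j) ^+ 2.
  rewrite !mxE expr2 mulr_sumr; apply: eq_bigr => j _.
  by rewrite !mxE; under eq_bigr do rewrite mxE mulr1.
have rowE k : (\sum_j X k j) ^+ 2 = \sum_j F k j * F k j.
  under eq_bigr do rewrite XE.
  rewrite -mulr_sumr (eq_bigr _ (fun j _ => esym (Fsq k j))).
  have c_gt0 := Fpos k; set c := \sum_j F k j * F k j in c_gt0 *.
  by rewrite exprMn exprVn sqr_sqrtr ?ltW // expr2 mulKf ?gt_eqF.
rewrite /mxtrace; under eq_bigr do rewrite diagE rowE.
rewrite exchange_big /=.
under eq_bigr do under eq_bigr do rewrite Fsq.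
by under eq_bigr do rewrite Fcol; rewrite sumr_const card_ord.
Qed.

End NormalizedIndicators.

Lemma component_index (T : finType) (e : rel T) (K : nat) :
  connect_sym e -> #|[set [set j | connect e i j] | i : T]| = K ->
  exists2 idx : T -> 'I_K, forall i j, (idx i == idx j) = connect e i j
    & forall k, exists j, idx j = k.
Proof.
move=> sym_e cardK; set comp := fun i => [set j | connect e i j].
have compS i : comp i \in [set comp i | i : T] by apply: imset_f.
pose idx i := cast_ord cardK (enum_rank_in (compS i) (comp i)).
exists idx.
- move=> i j; apply/eqP/idP => [/cast_ord_inj Eij | eij].
    have /(enum_rank_in_inj (compS i) (compS j)) ij := Eij.
    by have := connect0 e j; rewrite -[connect e j j]inE -/(comp j) -ij inE.
  have Eij : comp i = comp j.
    apply/setP => k; rewrite !inE; apply/idP/idP; apply: connect_trans => //.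
    by rewrite sym_e.
  rewrite /idx; congr (cast_ord _ _).
  by apply: enum_val_inj; rewrite !enum_rankK_in ?Eij.
- move=> k; have /imsetP [j _ Ej] := enum_valP (cast_ord (esym cardK) k).
  exists j; apply: (cast_ord_inj (eq_n := esym cardK)); rewrite cast_ordK.
  by apply: enum_val_inj; rewrite enum_rankK_in.
Qed.

Section ClusterIndicator.
Variables (R : realType) (K n : nat) (idx : 'I_n -> 'I_K).
Hypothesis idx_surj : forall k, exists j, idx j = k.

Definition indicator_mx : 'M[R]_(K, n) := \matrix_(k, j) (idx j == k)%:R.

Definition normalized_indicator_mx : 'M[R]_(K, n) :=
  inv_sqrt_diag (indicator_mx *m indicator_mx^T) *m indicator_mx.

Lemma indicator_mx_in_F : in_F indicator_mx.
Proof.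
split=> [k j | j | k].
- by rewrite mxE; case: eqP; [right | left].
- exists (idx j); split=> [|k]; first by rewrite mxE eqxx.
  by rewrite mxE; case: eqP => // _ /esym/eqP; rewrite oner_eq0.
- by have [j <-] := idx_surj k; exists j; rewrite mxE eqxx.
Qed.

Lemma normalized_indicator_in_H : in_H normalized_indicator_mx.
Proof. by exists indicator_mx; split=> //; apply: indicator_mx_in_F. Qed.

Lemma normalized_indicatorE k j : normalized_indicator_mx k j =
  (Num.sqrt (\sum_i (idx i == k)%:R))^-1 * (idx j == k)%:R.
Proof.
rewrite /normalized_indicator_mx /inv_sqrt_diag mul_diag_mx !mxE.
congr ((Num.sqrt _)^-1 * _).
apply: eq_bigr => i _; rewrite !mxE.
by case: (idx i == k); rewrite ?mulr1 ?mulr0.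
Qed.

Lemma normalized_indicator_proj (m : nat) (Y : 'M[R]_(m, n)) :
  (forall a i j, idx i = idx j -> Y a i = Y a j) ->
  Y *m normalized_indicator_mx^T *m normalized_indicator_mx = Y.
Proof.
move=> Yconst; apply/matrixP => a j; rewrite mxE (bigD1 (idx j)) //= big1.
  rewrite addr0 normalized_indicatorE eqxx mulr1 mxE.
  set c := \sum_i (idx i == idx j)%:R.
  have c_gt0 : 0 < c.
    by rewrite /c (bigD1 j) //= eqxx ltr_pwDl ?ltr01 // sumr_ge0 // => i _.
  transitivity (Y a j * c * (Num.sqrt c)^-1 * (Num.sqrt c)^-1).
    apply: (congr1 (fun x => x / _)); rewrite /c mulr_sumr mulr_suml.
    apply: eq_bigr => i _.
    rewrite mxE normalized_indicatorE; case: eqVneq => [Ei | _] /=.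
      by rewrite (Yconst a i j Ei); ring.
    by rewrite !mulr0 mul0r.
  by rewrite -mulrA -invfM -expr2 sqr_sqrtr ?ltW // mulfK ?gt_eqF.
by move=> k kj; rewrite normalized_indicatorE eq_sym (negbTE kj) !mulr0.
Qed.

End ClusterIndicator.

Lemma ideal_graph_partition (R : realType) (n K : nat) (W : 'M[R]_n) :
  (forall i j, W i j = W j i) -> ideal_graph W K ->
  exists X0 : 'M[R]_(K, n), [/\ in_H X0,
    forall k, const_on_components W (X0 k)
    & forall Y : 'M[R]_(K, n), (forall k, const_on_components W (Y k)) ->
      Y *m X0^T *m X0 = Y].
Proof.
move=> Wsym; rewrite /ideal_graph /n_components /=.
have sym_e : connect_sym [rel i j | 0 < W i j].
  by apply: sym_connect_sym => i j /=; rewrite Wsym.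
move=> /(component_index sym_e) [idx idxE idx_surj].
exists (normalized_indicator_mx R idx); split.
- exact: normalized_indicator_in_H.
- by move=> k i j; rewrite -idxE !normalized_indicatorE => /eqP ->.
- move=> Y Yconst; apply: normalized_indicator_proj => a i j /eqP.
  by rewrite idxE => /Yconst.
Qed.

Section KMeans.
Variables (R : realType) (p n K : nat) (A : 'M[R]_(p, n)).

Lemma frob2_mxtrace (m l : nat) (M : 'M[R]_(m, l)) : frob2 M = \tr (M *m M^T).
Proof.
apply: eq_bigr => i _; rewrite !mxE.
by apply: eq_bigr => j _; rewrite mxE expr2.
Qed.

Lemma frob2_proj_residual (X : 'M[R]_(K, n)) : X *m X^T = 1%:M ->
  frob2 (A - A *m X^T *m X) = frob2 A - \tr (X *m (A^T *m A) *m X^T).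
Proof.
move=> XXt; rewrite !frob2_mxtrace gram_proj_residual // linearB /=.
by congr (_ - _); rewrite -mulmxA mxtrace_mulC !mulmxA.
Qed.

Lemma frob2_proj_residual_le (X : 'M[R]_(K, n)) (D : 'M[R]_(p, K)) :
  X *m X^T = 1%:M -> frob2 (A - A *m X^T *m X) <= frob2 (A - D *m X).
Proof.
move=> XXt; rewrite !frob2_mxtrace.
set P := A - A *m X^T *m X; set Q := A *m X^T - D.
have -> : A - D *m X = P + Q *m X.
  by rewrite /P /Q mulmxBl -mulmxA addrA subrK.
have PXt : P *m X^T = 0 by rewrite /P mulmxBl -!mulmxA XXt mulmx1 subrr.
have XPt : X *m P^T = 0 by rewrite -(trmxK X) -trmx_mul PXt trmx0.
clearbody P Q.
have -> : (P + Q *m X) *m (P + Q *m X)^T = P *m P^T + Q *m Q^T.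
  rewrite [(P + _)^T]linearD /= trmx_mul mulmxDl !mulmxDr.
  rewrite (mulmxA P) PXt mul0mx addr0.
  by rewrite -!(mulmxA Q) XPt mulmx0 add0r (mulmxA X) XXt mul1mx.
by rewrite linearD lerDl mxtrace_gram_ge0.
Qed.

Lemma kmeans_mxtrace_max (H X : 'M[R]_(K, n)) (D : 'M[R]_(p, K)) :
  H *m H^T = 1%:M -> in_H X ->
  (forall (D' : 'M[R]_(p, K)) (X' : 'M[R]_(K, n)),
     in_H X' -> frob2 (A - D *m H) <= frob2 (A - D' *m X')) ->
  \tr (X *m (A^T *m A) *m X^T) <= \tr (H *m (A^T *m A) *m H^T).
Proof.
move=> HHt XinH Hopt.
have := le_trans (frob2_proj_residual_le D HHt) (Hopt (A *m X^T) _ XinH).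
rewrite (frob2_proj_residual HHt).
by rewrite (frob2_proj_residual (in_H_orthonormal XinH)); lra.
Qed.

End KMeans.

Lemma orthonormal_rows_rotate (R : comUnitRingType) (K n : nat)
    (P Y Z : 'M[R]_(K, n)) :
  Y *m Y^T = 1%:M -> Z *m Z^T = 1%:M ->
  Y *m P^T *m P = Y -> Z *m P^T *m P = Z ->
  exists Q : 'M[R]_K, Q^T *m Q = 1%:M /\ Y = Q *m Z.
Proof.
move=> YYt ZZt YP ZP; set N := Y *m P^T; set M := Z *m P^T.
have NNt : N *m N^T = 1%:M by rewrite trmx_mul trmxK mulmxA YP.
have MMt : M *m M^T = 1%:M by rewrite trmx_mul trmxK mulmxA ZP.
exists (N *m M^T); split.
  by rewrite trmx_mul trmxK -mulmxA (mulmxA N^T) (mulmx1C NNt) mul1mx.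
by rewrite -mulmxA -{1}ZP -/M (mulmxA M^T) (mulmx1C MMt) mul1mx YP.
Qed.

Section ShiftedGram.
Variables (R : realType) (p n : nat) (A : 'M[R]_(p, n)) (beta : R).

Lemma augmented_gramE : 0 <= beta ->
  (col_mx (const_mx (Num.sqrt beta) : 'rV[R]_n) A)^T *m
    col_mx (const_mx (Num.sqrt beta)) A = A^T *m A + beta *: const_mx 1.
Proof.
move=> beta_ge0; rewrite tr_col_mx mul_row_col addrC; congr (_ + _).
apply/matrixP => i j; rewrite !mxE big_ord1 !mxE.
by rewrite -expr2 sqr_sqrtr // mulr1.
Qed.

Hypothesis A1 : A *m ones n = 0.

Lemma gram_row_sum0 i : \sum_j (A^T *m A) i j = 0.
Proof.
have /matrixP /(_ i 0) := congr1 (mulmx A^T) A1; rewrite mulmxA mulmx0 !mxE.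
by under eq_bigr do rewrite [ones _ _ _]mxE mulr1.
Qed.

Lemma min_entry_le0 (mu : R) : is_min_entry (A^T *m A) mu -> mu <= 0.
Proof.
move=> [[i [j _]] mu_le].
have : \sum_(k < n) mu <= \sum_k (A^T *m A) i k by apply: ler_sum.
rewrite gram_row_sum0 sumr_const card_ord -mulr_natr pmulr_lle0 // ltr0n.
exact: leq_ltn_trans (ltn_ord j).
Qed.

Lemma gram_shift_regular : (forall i j, - beta <= (A^T *m A) i j) ->
  regular_weights (A^T *m A + beta *: const_mx 1) (beta * n%:R).
Proof.
move=> min_beta; split=> [i j | i j | i].
- by rewrite !mxE; congr (_ + _); apply: eq_bigr => k _; rewrite !mxE mulrC.
- rewrite mxE [X in _ + X]mxE [X in _ + _ * X]mxE mulr1.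
  by have := min_beta i j; lra.
- under eq_bigr do rewrite mxE [X in _ + X]mxE [X in _ + _ * X]mxE mulr1.
  by rewrite big_split /= gram_row_sum0 add0r sumr_const card_ord mulr_natr.
Qed.

Lemma mxtrace_shift_in_H (K : nat) (X : 'M[R]_(K, n)) : in_H X ->
  \tr (X *m (A^T *m A + beta *: const_mx 1) *m X^T) =
  \tr (X *m (A^T *m A) *m X^T) + beta * n%:R.
Proof.
move=> XinH; rewrite mulmxDr mulmxDl linearD /= -scalemxAr -scalemxAl.
by rewrite linearZ /= in_H_mxtrace_const.
Qed.

End ShiftedGram.

Section CompactSVD.
Variables (R : realType) (p n r : nat) (A : 'M[R]_(p, n)) (U : 'M[R]_(p, r))
  (s : 'rV[R]_r) (V : 'M[R]_(r, n)).
Hypotheses (UtU : U^T *m U = 1%:M) (svdA : A = U *m diag_mx s *m V).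

Lemma svd_gram : A^T *m A = V^T *m diag_mx (map_mx (fun x => x ^+ 2) s) *m V.
Proof.
have diag_sqr : diag_mx s *m diag_mx s = diag_mx (map_mx (fun x => x ^+ 2) s).
  apply/matrixP => i j; rewrite mul_diag_mx !mxE.
  by case: eqVneq => [->|_]; rewrite ?mulr1n ?mulr0n ?mulr0 // expr2.
rewrite svdA !trmx_mul tr_diag_mx -diag_sqr !mulmxA.
by rewrite -(mulmxA _ U^T) UtU mulmx1.
Qed.

Lemma svd_mul_ones : A *m ones n = 0 -> (forall i, 0 < s 0 i) ->
  V *m ones n = 0.
Proof.
move=> A1 s_gt0.
have UtA : U^T *m A = diag_mx s *m V by rewrite svdA !mulmxA UtU mul1mx.
have : diag_mx s *m (V *m ones n) = 0 by rewrite mulmxA -UtA -mulmxA A1 mulmx0.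
move=> /matrixP DV; apply/matrixP => i j; move: (DV i j).
by rewrite mul_diag_mx !mxE => /eqP; rewrite mulf_eq0 gt_eqF //= => /eqP.
Qed.

End CompactSVD.

Section AugmentedBasis.
Variables (R : realType) (r n : nat) (V : 'M[R]_(r, n)).

Definition augmented_basis : 'M[R]_(1 + r, n) :=
  col_mx (const_mx (Num.sqrt n%:R)^-1) V.

Lemma pca_stack_rowsub (K : nat) (KR : (K <= 1 + r)%N) :
  pca_stack K V = rowsub (widen_ord KR) augmented_basis.
Proof.
apply/matrixP => k j; rewrite !mxE; case: splitP => [k0 /= Ek|k' /= Ek].
  by rewrite (ord1 k0) in Ek; rewrite Ek mxE.
rewrite Ek /row_at; case: insubP => [k'' _ Ek'' | ]; last by rewrite ltn_ord.
by congr (V _ j); apply: val_inj.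
Qed.

Hypotheses (n_gt0 : (0 < n)%N) (V1 : V *m ones n = 0).

Let t : R := Num.sqrt n%:R.

Let sqr_sqrt_n : t ^+ 2 = n%:R.
Proof. by rewrite sqr_sqrtr // ler0n. Qed.

Let sqrt_n_neq0 : t != 0.
Proof. by rewrite sqrtr_eq0 -ltNge ltr0n. Qed.

Lemma augmented_basis_orthonormal :
  V *m V^T = 1%:M -> augmented_basis *m augmented_basis^T = 1%:M.
Proof.
move=> VVt.
have uut : (const_mx t^-1 : 'rV[R]_n) *m (const_mx t^-1)^T = 1%:M.
  apply/matrixP => i j; rewrite !ord1 !mxE /=; under eq_bigr do rewrite !mxE.
  rewrite sumr_const card_ord -mulr_natl -sqr_sqrt_n -/t; field.
  exact: sqrt_n_neq0.
have Vut : V *m (const_mx t^-1 : 'rV[R]_n)^T = 0.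
  apply/matrixP => i j; move/matrixP: V1 => /(_ i ord0); rewrite !mxE => V1i.
  rewrite (eq_bigr (fun k => V i k * ones n k ord0 * t^-1)).
    by rewrite -mulr_suml V1i mul0r.
  by move=> k _; rewrite !mxE mulr1.
rewrite /augmented_basis -/t tr_col_mx mul_col_row uut Vut VVt.
by rewrite -(trmxK (_ *m V^T)) trmx_mul trmxK Vut trmx0 -scalar_mx_block.
Qed.

Lemma augmented_basis_eigen (lam : 'rV[R]_r) (beta : R) :
  V^T *m diag_mx lam *m V + beta *: const_mx 1 =
  augmented_basis^T *m diag_mx (row_mx (const_mx (beta * n%:R)) lam) *m
  augmented_basis.
Proof.
rewrite /augmented_basis -/t tr_col_mx diag_mx_row mul_row_block.
rewrite !mulmx0 addr0 add0r mul_row_col addrC; congr (_ + _).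
apply/matrixP => i j; rewrite !mxE big_ord1 !mxE big_ord1 !mxE eqxx mulr1n.
rewrite mulr1 -sqr_sqrt_n; field; exact: sqrt_n_neq0.
Qed.

End AugmentedBasis.

Section PCAStack.
Variables (R : realType) (p n r K : nat) (A : 'M[R]_(p, n)) (U : 'M[R]_(p, r))
  (s : 'rV[R]_r) (V : 'M[R]_(r, n)) (beta : R).
Hypotheses (UtU : U^T *m U = 1%:M) (VVt : V *m V^T = 1%:M)
  (s_gt0 : forall i, 0 < s 0 i)
  (s_noninc : forall i j : 'I_r, (i <= j)%N -> s 0 j <= s 0 i)
  (svdA : A = U *m diag_mx s *m V) (A1 : A *m ones n = 0)
  (n_gt0 : (0 < n)%N) (K_gt0 : (0 < K)%N) (KR : (K <= 1 + r)%N).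

Let V1 : V *m ones n = 0 := svd_mul_ones UtU svdA A1 s_gt0.

Lemma pca_stack_orthonormal : pca_stack K V *m (pca_stack K V)^T = 1%:M.
Proof.
rewrite (pca_stack_rowsub V KR) trmx_mxsub -mxsub_mul.
rewrite augmented_basis_orthonormal //.
by apply/matrixP => i j; rewrite !mxE.
Qed.

Hypothesis regW :
  regular_weights (A^T *m A + beta *: const_mx 1) (beta * n%:R).

Lemma pca_stack_const (X : 'M[R]_(K, n)) : X *m X^T = 1%:M ->
  K%:R * (beta * n%:R) <= \tr (X *m (A^T *m A + beta *: const_mx 1) *m X^T) ->
  forall k,
    const_on_components (A^T *m A + beta *: const_mx 1) (pca_stack K V k).
Proof.
move=> XXt trX k i j cij; rewrite (pca_stack_rowsub V KR) [LHS]mxE [RHS]mxE.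
pose lam := row_mx (const_mx (beta * n%:R) : 'rV[R]_1)
  (map_mx (fun x => x ^+ 2) s).
have W_eigen : A^T *m A + beta *: const_mx 1 =
    (augmented_basis V)^T *m diag_mx lam *m augmented_basis V.
  by rewrite (svd_gram UtU svdA) augmented_basis_eigen.
have VtVtt := augmented_basis_orthonormal n_gt0 V1 VVt.
have lam_le := eigenvalue_le_degree regW VtVtt W_eigen.
have lam_ge0 l : 0 <= lam 0 l.
  rewrite mxE; case: splitP => l' _; rewrite mxE ?sqr_ge0 //.
  exact: regular_degree_ge0 regW n_gt0.
have lam_noninc (l l' : 'I_(1 + r)) : (l <= l')%N -> lam 0 l' <= lam 0 l.
  rewrite [lam 0 l]mxE; case: splitP => [l0 _|m El].
    by rewrite [X in _ <= X]mxE lam_le.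
  rewrite mxE; case: splitP => [l0 El'|m' El'].
    by rewrite El El' (ord1 l0).
  rewrite !mxE El El' leq_add2l => mm'.
  by rewrite ler_sqr ?nnegrE ?s_noninc // ltW.
apply: (top_eigenvectors_const regW VtVtt W_eigen _ lam_ge0 lam_noninc XXt trX
  (ltn_ord k : (widen_ord KR k < K)%N)) cij.
by rewrite K_gt0.
Qed.

End PCAStack.

Theorem theorem3 (R : realType) (p n K r : nat)
  (A : 'M[R]_(p, n)) (U : 'M[R]_(p, r)) (s : 'rV[R]_r) (V : 'M[R]_(r, n))
  (beta : R) (H : 'M[R]_(K, n)) :
  A *m ones n = 0 ->
  \rank A = r ->
  U^T *m U = 1%:M ->
  V *m V^T = 1%:M ->
  (forall i, 0 < s 0 i) ->
  (forall i j : 'I_r, (i <= j)%N -> s 0 j <= s 0 i) ->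
  A = U *m diag_mx s *m V ->
  (2 <= K <= r.+1)%N ->
  is_min_entry (A^T *m A) (- beta) ->
  in_H H ->
  (exists D : 'M[R]_(p, K), forall (D' : 'M[R]_(p, K)) (X : 'M[R]_(K, n)),
      in_H X -> frob2 (A - D *m H) <= frob2 (A - D' *m X)) ->
  (let At : 'M[R]_(1 + p, n) := col_mx (const_mx (Num.sqrt beta)) A in
   ideal_graph (At^T *m At) K) ->
  exists Rm : 'M[R]_K, Rm^T *m Rm = 1%:M /\ pca_stack K V = Rm *m H.
Proof.
move=> A1 _ UtU VVt s_gt0 s_noninc svdA /andP [K2 Kr] minG H_in_H [D Hopt].
have beta_ge0 : 0 <= beta by rewrite -oppr_le0 (min_entry_le0 A1 minG).
have n_gt0 : (0 < n)%N.
  by case: minG => [[i _] _]; apply: leq_ltn_trans (ltn_ord i).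
rewrite /= augmented_gramE //; set W := _ + _ => ideal.
have regW : regular_weights W (beta * n%:R).
  exact: gram_shift_regular A1 (proj2 minG).
have [Wsym _ _] := regW.
have [X0 [X0_in_H X0_const X0_proj]] := ideal_graph_partition Wsym ideal.
have HHt := in_H_orthonormal H_in_H.
have trH : K%:R * (beta * n%:R) <= \tr (H *m W *m H^T).
  rewrite -(mxtrace_rows_const regW (in_H_orthonormal X0_in_H) X0_const).
  rewrite !mxtrace_shift_in_H // lerD2r.
  exact: kmeans_mxtrace_max HHt X0_in_H Hopt.
have K_gt0 : (0 < K)%N := ltnW K2.
have Q_const := pca_stack_const UtU VVt s_gt0 s_noninc svdA A1 n_gt0 K_gt0 Kr
  regW HHt trH.
have H_const := rows_const_of_mxtrace_ge regW HHt trH.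
exact: orthonormal_rows_rotate
  (pca_stack_orthonormal UtU VVt s_gt0 svdA A1 n_gt0 Kr) HHt
  (X0_proj _ Q_const) (X0_proj _ H_const).
Qed.
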